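(* Let $K\subseteq\mathbb{R}^d$ be compact, let $f\in C^1(K)$ and let $df:K\to\mathbb{R}^d$ be a continuous derivative of $f$ on $K$. Then for every rectifiable path $\gamma:[a,b]\to K$, $$\int_\gamma df=f(\gamma(b))-f(\gamma(a)).$$
   Context: A function $df:K\to\mathbb{R}^d$ (identifying linear functionals on $\mathbb{R}^d$ with vectors via the scalar product $\langle\cdot,\cdot\rangle$) is a derivative of $f:K\to\mathbb{R}$ on $K$ if for every $x\in K$, $\lim_{y\to x,\,y\in K\setminus\{x\}}\frac{f(y)-f(x)-\langle df(x),y-x\rangle}{|y-x|}=0$. $C^1(K)$ is the set of $f:K\to\mathbb{R}$ admitting a continuous derivative on $K$. A path $\gamma:[a,b]\to K$ is a continuous map; its length is $L(\gamma)=\sup\{\sum_{j=1}^n|\gamma(t_j)-\gamma(t_{j-1})|: a=t_0<\dots<t_n=b\}$, and $\gamma$ is rectifiable if $L(\gamma)<\infty$. For continuous $F:K\to\mathbb{R}^d$ and rectifiable $\gamma$, the path integral $\int_\gamma F$ is the limit of the Riemann–Stieltjes sums $\sum_{j=1}^n\langle F(\gamma(\tau_j)),\gamma(t_j)-\gamma(t_{j-1})\rangle$ over partitions $a=t_0<\dots<t_n=b$ with mesh tending to $0$ and $t_{j-1}\le\tau_j\le t_j$. *)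

From Stdlib Require Import Reals Lra.
Open Scope R_scope.

(** Points of R^d: real sequences vanishing from index d on
    (so that equality of points is equality of their d coordinates). *)
Definition vec (d : nat) : Type :=
  { x : nat -> R | forall i : nat, (d <= i)%nat -> x i = 0 }.

Definition coord {d : nat} (x : vec d) : nat -> R := proj1_sig x.

Fixpoint sum_lt (n : nat) (g : nat -> R) : R :=
  match n with
  | O => 0
  | S m => sum_lt m g + g m
  end.

Definition dotR (d : nat) (u v : nat -> R) : R := sum_lt d (fun i => u i * v i).
Definition normR (d : nat) (u : nat -> R) : R := sqrt (dotR d u u).

Definition vdiff {d : nat} (y x : vec d) : nat -> R := fun i => coord y i - coord x i.

Definition dist {d : nat} (x y : vec d) : R := normR d (vdiff y x).

Definition compactK {d : nat} (K : vec d -> Prop) : Prop :=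
  forall u : nat -> vec d, (forall n, K (u n)) ->
  exists (phi : nat -> nat) (l : vec d),
    (forall n m, (n < m)%nat -> (phi n < phi m)%nat) /\ K l /\
    (forall eps, eps > 0 -> exists N, forall n, (N <= n)%nat -> dist (u (phi n)) l < eps).

Definition continuous_on {d : nat} (K : vec d -> Prop) (F : vec d -> vec d) : Prop :=
  forall x, K x -> forall eps, eps > 0 -> exists delta, delta > 0 /\
    forall y, K y -> dist x y < delta -> dist (F x) (F y) < eps.

Definition is_derivative {d : nat} (K : vec d -> Prop) (f : vec d -> R)
  (df : vec d -> vec d) : Prop :=
  forall x, K x -> forall eps, eps > 0 -> exists delta, delta > 0 /\
    forall y, K y -> y <> x -> dist x y < delta ->
      Rabs ((f y - f x - dotR d (coord (df x)) (vdiff y x)) / dist x y) < eps.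

Definition in_C1 {d : nat} (K : vec d -> Prop) (f : vec d -> R) : Prop :=
  exists df, is_derivative K f df /\ continuous_on K df.

Definition is_path {d : nat} (K : vec d -> Prop) (gamma : R -> vec d) (a b : R) : Prop :=
  a < b /\
  (forall t, a <= t <= b -> K (gamma t)) /\
  (forall t, a <= t <= b -> forall eps, eps > 0 -> exists delta, delta > 0 /\
     forall s, a <= s <= b -> Rabs (s - t) < delta -> dist (gamma t) (gamma s) < eps).

Definition is_partition (a b : R) (n : nat) (t : nat -> R) : Prop :=
  t O = a /\ t n = b /\ (forall j, (j < n)%nat -> t j < t (S j)).

Definition poly_length {d : nat} (gamma : R -> vec d) (n : nat) (t : nat -> R) : R :=
  sum_lt n (fun j => dist (gamma (t j)) (gamma (t (S j)))).

Definition rectifiable {d : nat} (gamma : R -> vec d) (a b : R) : Prop :=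
  exists M, forall n t, is_partition a b n t -> poly_length gamma n t <= M.

(** Riemann--Stieltjes sum sum_{j=1}^n <F(gamma(tau_j)), gamma(t_j) - gamma(t_{j-1})>,
    with tau (S j) the tag of [t j, t (S j)]. *)
Definition RS_sum {d : nat} (F : vec d -> vec d) (gamma : R -> vec d)
  (n : nat) (t tau : nat -> R) : R :=
  sum_lt n (fun j => dotR d (coord (F (gamma (tau (S j)))))
                            (vdiff (gamma (t (S j))) (gamma (t j)))).

Definition is_path_integral {d : nat} (F : vec d -> vec d) (gamma : R -> vec d)
  (a b : R) (I : R) : Prop :=
  forall eps, eps > 0 -> exists delta, delta > 0 /\
    forall n t tau, is_partition a b n t ->
      (forall j, (j < n)%nat -> t (S j) - t j < delta) ->
      (forall j, (j < n)%nat -> t j <= tau (S j) <= t (S j)) ->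
      Rabs (RS_sum F gamma n t tau - I) < eps.

(* Let [Lam w] be the length of [gamma] on [[a, w]]. By uniform continuity of [df o gamma]
   on [[a, b]], on every partition interval [[u, v]] of small mesh with tag [tau] the gradient
   [df (gamma s)] stays [eta]-close to [c = df (gamma tau)]. The differentiability of [f] then
   bounds the increments of [s |-> f (gamma s) - <c, gamma s>] locally by [2 eta] times the
   chord length, and a continuous induction along [[u, v]] (no differentiability of [gamma]
   is available, so no mean value theorem) turns this into
   [|f (gamma v) - f (gamma u) - <c, gamma v - gamma u>| <= 2 eta (Lam v - Lam u)].
   Summing over the partition telescopes to [2 eta (Lam b - Lam a)]. *)

From Stdlib Require Import Reals Lra Lia Classical ProofIrrelevance FunctionalExtensionality.
(* Imported after [Reals] so that [dist] is the Euclidean distance of [Defs], not [Rtopology.dist]. *)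
From Pilot Require Import Defs.
Open Scope R_scope.

Lemma Rabs_lt_iff x e : Rabs x < e <-> -e < x < e.
Proof. unfold Rabs; destruct (Rcase_abs x); split; intros; lra. Qed.

Lemma sum_lt_ext n g h :
  (forall j, (j < n)%nat -> g j = h j) -> sum_lt n g = sum_lt n h.
Proof.
  induction n as [|n IH]; simpl; intros H; [reflexivity|].
  rewrite IH, H; auto; intros; apply H; lia.
Qed.

Lemma sum_lt_plus n g h : sum_lt n (fun j => g j + h j) = sum_lt n g + sum_lt n h.
Proof. induction n as [|n IH]; simpl; [lra|]. rewrite IH; lra. Qed.

Lemma sum_lt_minus n g h : sum_lt n (fun j => g j - h j) = sum_lt n g - sum_lt n h.
Proof. induction n as [|n IH]; simpl; [lra|]. rewrite IH; lra. Qed.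

Lemma sum_lt_scal n c g : sum_lt n (fun j => c * g j) = c * sum_lt n g.
Proof. induction n as [|n IH]; simpl; [lra|]. rewrite IH; lra. Qed.

Lemma sum_lt_telescope n g : sum_lt n (fun j => g (S j) - g j) = g n - g O.
Proof. induction n as [|n IH]; simpl; [lra|]. rewrite IH; lra. Qed.

Lemma sum_lt_le n g h :
  (forall j, (j < n)%nat -> g j <= h j) -> sum_lt n g <= sum_lt n h.
Proof.
  induction n as [|n IH]; simpl; intros H; [lra|].
  assert (sum_lt n g <= sum_lt n h) by (apply IH; intros; apply H; lia).
  assert (g n <= h n) by (apply H; lia).
  lra.
Qed.

Lemma sum_lt_nonneg n g : (forall j, (j < n)%nat -> 0 <= g j) -> 0 <= sum_lt n g.
Proof.
  induction n as [|n IH]; simpl; intros H; [lra|].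
  assert (0 <= sum_lt n g) by (apply IH; intros; apply H; lia).
  assert (0 <= g n) by (apply H; lia).
  lra.
Qed.

Lemma sum_lt_nonneg_eq0 n g :
  (forall j, (j < n)%nat -> 0 <= g j) -> sum_lt n g = 0 ->
  forall j, (j < n)%nat -> g j = 0.
Proof.
  induction n as [|n IH]; simpl; intros H Hs j Hj; [lia|].
  assert (0 <= sum_lt n g) by (apply sum_lt_nonneg; intros; apply H; lia).
  assert (0 <= g n) by (apply H; lia).
  destruct (Nat.eq_dec j n) as [->|Hjn]; [lra|].
  apply IH; [intros; apply H; lia | lra | lia].
Qed.

Lemma Rabs_sum_lt_le n g : Rabs (sum_lt n g) <= sum_lt n (fun j => Rabs (g j)).
Proof.
  induction n as [|n IH]; simpl; [rewrite Rabs_R0; lra|].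
  eapply Rle_trans; [apply Rabs_triang | lra].
Qed.

Lemma dotR_minus_l d u v w : dotR d (fun i => v i - w i) u = dotR d v u - dotR d w u.
Proof. unfold dotR. rewrite <- sum_lt_minus. apply sum_lt_ext; intros; ring. Qed.

Lemma dotR_minus_r d u v w : dotR d u (fun i => v i - w i) = dotR d u v - dotR d u w.
Proof. unfold dotR. rewrite <- sum_lt_minus. apply sum_lt_ext; intros; ring. Qed.

Lemma dotR_self_nonneg d u : 0 <= dotR d u u.
Proof. apply sum_lt_nonneg; intros; nra. Qed.

Lemma dotR_self_comb d u v lam mu :
  dotR d (fun i => lam * u i + mu * v i) (fun i => lam * u i + mu * v i)
  = lam * lam * dotR d u u + 2 * lam * mu * dotR d u v + mu * mu * dotR d v v.
Proof.
  unfold dotR. rewrite <- !sum_lt_scal, <- !sum_lt_plus.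
  apply sum_lt_ext; intros; ring.
Qed.

Lemma Cauchy_Schwarz_sq d u v : dotR d u v * dotR d u v <= dotR d u u * dotR d v v.
Proof.
  set (A := dotR d u u); set (B := dotR d u v); set (C := dotR d v v).
  assert (HQ : forall lam mu, 0 <= lam * lam * A + 2 * lam * mu * B + mu * mu * C).
  { intros lam mu. unfold A, B, C. rewrite <- dotR_self_comb. apply dotR_self_nonneg. }
  assert (HA : 0 <= A) by apply dotR_self_nonneg.
  (* [(lam, mu) = (B, -A)] gives [A (A C - B^2) >= 0]; if [A = 0] the form is linear in [lam]. *)
  destruct (Req_dec A 0) as [HA0|HA0].
  - specialize (HQ (- (C + 1)) B). rewrite HA0 in HQ.
    assert (HC : 0 <= C) by apply dotR_self_nonneg.
    rewrite HA0. nra.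
  - specialize (HQ B (- A)).
    assert (HApos : 0 < A) by lra.
    apply (Rmult_le_reg_l A); [exact HApos | nra].
Qed.

Lemma Cauchy_Schwarz d u v : Rabs (dotR d u v) <= normR d u * normR d v.
Proof.
  unfold normR. rewrite <- sqrt_mult by apply dotR_self_nonneg.
  rewrite <- sqrt_Rsqr_abs. apply sqrt_le_1_alt. apply Cauchy_Schwarz_sq.
Qed.

Lemma normR_nonneg d u : 0 <= normR d u.
Proof. apply sqrt_pos. Qed.

Lemma normR_triangle d u v : normR d (fun i => u i + v i) <= normR d u + normR d v.
Proof.
  assert (Hsum : dotR d (fun i => u i + v i) (fun i => u i + v i)
                 = dotR d u u + 2 * dotR d u v + dotR d v v).
  { unfold dotR. rewrite <- sum_lt_scal, <- !sum_lt_plus.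
    apply sum_lt_ext; intros; ring. }
  assert (HCS := Cauchy_Schwarz d u v).
  assert (Hu := normR_nonneg d u). assert (Hv := normR_nonneg d v).
  assert (Eu : normR d u * normR d u = dotR d u u) by apply sqrt_sqrt, dotR_self_nonneg.
  assert (Ev : normR d v * normR d v = dotR d v v) by apply sqrt_sqrt, dotR_self_nonneg.
  unfold normR at 1. rewrite Hsum.
  rewrite <- (sqrt_square (normR d u + normR d v)) by lra.
  apply sqrt_le_1_alt. pose proof (Rle_abs (dotR d u v)). nra.
Qed.

Lemma dist_nonneg d (x y : vec d) : 0 <= dist x y.
Proof. apply normR_nonneg. Qed.

Lemma dist_sym d (x y : vec d) : dist x y = dist y x.
Proof. unfold dist, normR, dotR, vdiff. f_equal. apply sum_lt_ext; intros; ring. Qed.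

Lemma dist_triangle d (x y z : vec d) : dist x z <= dist x y + dist y z.
Proof.
  unfold dist. rewrite Rplus_comm.
  replace (vdiff z x) with (fun i => vdiff z y i + vdiff y x i)
    by (apply functional_extensionality; intros; unfold vdiff; ring).
  apply normR_triangle.
Qed.

Lemma dist_eq0 d (x y : vec d) : dist x y = 0 <-> x = y.
Proof.
  split; intros H.
  - unfold dist, normR in H. apply sqrt_eq_0 in H; [|apply dotR_self_nonneg].
    assert (Hz := sum_lt_nonneg_eq0 d _ (fun j _ => Rle_0_sqr _) H).
    destruct x as [x hx], y as [y hy]. unfold vdiff, coord in Hz; simpl in Hz.
    assert (x = y) as <-.
    { apply functional_extensionality; intros i. destruct (Nat.lt_ge_cases i d).
      - specialize (Hz i H0). unfold Rsqr in Hz. nra.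
      - rewrite hx, hy; auto. }
    f_equal. apply proof_irrelevance.
  - subst y. unfold dist, normR, dotR, vdiff.
    rewrite <- sqrt_0. f_equal. rewrite (sum_lt_ext _ _ (fun _ => 0 * 0)).
    + rewrite sum_lt_scal; ring.
    + intros; ring.
Qed.

Lemma dist_pos d (x y : vec d) : x <> y -> 0 < dist x y.
Proof.
  intros Hxy. destruct (dist_nonneg d x y) as [Hlt|Heq]; [exact Hlt|].
  exfalso. apply Hxy, dist_eq0. auto.
Qed.

Lemma sup_approx (E : R -> Prop) m eps : is_lub E m -> eps > 0 ->
  exists w, E w /\ m - eps < w.
Proof.
  intros [_ Hl] Heps. apply NNPP; intros Hn.
  assert (m <= m - eps); [|lra].
  apply Hl. intros x Ex. apply Rnot_lt_le; intros Hx. apply Hn; exists x; split; auto; lra.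
Qed.

Lemma increment_bound_of_local (psi G : R -> R) u v : u <= v ->
  (forall s s', u <= s -> s <= s' -> s' <= v -> G s <= G s') ->
  (forall s, u <= s <= v -> exists delta, delta > 0 /\
     forall s', u <= s' <= v -> Rabs (s' - s) < delta ->
       Rabs (psi s' - psi s) <= Rabs (G s' - G s)) ->
  Rabs (psi v - psi u) <= G v - G u.
Proof.
  intros Huv HG Hloc.
  set (E := fun w => u <= w <= v /\ Rabs (psi w - psi u) <= G w - G u).
  assert (Hstep : forall w w', E w -> w <= w' <= v ->
            Rabs (psi w' - psi w) <= Rabs (G w' - G w) -> E w').
  { intros w w' [Hw HEw] Hw' Hinc. split; [lra|].
    rewrite (Rabs_right (G w' - G w)) in Hinc by (assert (G w <= G w') by (apply HG; lra); lra).
    replace (psi w' - psi u) with ((psi w' - psi w) + (psi w - psi u)) by ring.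
    eapply Rle_trans; [apply Rabs_triang | lra]. }
  assert (Eu : E u).
  { split; [lra|]. unfold Rminus. rewrite !Rplus_opp_r, Rabs_R0. lra. }
  assert (HEb : bound E) by (exists v; intros x [Hx _]; lra).
  destruct (completeness E HEb (ex_intro _ u Eu)) as [m Hm].
  assert (Hum : u <= m) by (apply (proj1 Hm); auto).
  assert (Hmv : m <= v) by (apply (proj2 Hm); intros x [Hx _]; lra).
  destruct (Hloc m (conj Hum Hmv)) as [delta [Hdelta Hd]].
  assert (Em : E m).
  { destruct (sup_approx E m delta Hm Hdelta) as [w [Ew Hw]].
    assert (Hwm : w <= m) by (apply (proj1 Hm); auto).
    apply (Hstep w m Ew); [lra|].
    rewrite (Rabs_minus_sym (psi m)), (Rabs_minus_sym (G m)).
    destruct Ew as [Hw' _]. apply Hd; [lra | apply Rabs_lt_iff; lra]. }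
  destruct (Rle_lt_dec v m) as [Hvm|Hmv'].
  - replace v with m by lra. apply Em.
  - set (w' := Rmin v (m + delta / 2)).
    assert (Hw' : m < w' <= m + delta / 2 /\ w' <= v)
      by (unfold w', Rmin; destruct (Rle_dec v (m + delta / 2)); lra).
    assert (Ew' : E w').
    { apply (Hstep m w' Em); [lra|]. apply Hd; [lra | apply Rabs_lt_iff; lra]. }
    assert (w' <= m) by (apply (proj1 Hm); auto). lra.
Qed.

Section UniformContinuity.

Variable X : Type.
Variable D : X -> X -> R.
Hypothesis D_sym : forall x y, D x y = D y x.
Hypothesis D_triangle : forall x y z, D x z <= D x y + D y z.

Lemma close_pairs_near_point (g : R -> X) a b m eps : eps > 0 ->
  (forall eps', eps' > 0 -> exists delta, delta > 0 /\
     forall s, a <= s <= b -> Rabs (s - m) < delta -> D (g m) (g s) < eps') ->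
  exists delta, delta > 0 /\
    forall s s', a <= s <= b -> a <= s' <= b -> Rabs (s - m) < delta -> Rabs (s' - m) < delta ->
      D (g s) (g s') < eps.
Proof.
  intros Heps Hc. destruct (Hc (eps / 2) ltac:(lra)) as [delta [Hdelta Hd]].
  exists delta; split; [exact Hdelta|]. intros s s' Hs Hs' Hsm Hs'm.
  eapply Rle_lt_trans; [apply (D_triangle _ (g m))|]. rewrite D_sym.
  assert (D (g m) (g s) < eps / 2) by (apply Hd; auto).
  assert (D (g m) (g s') < eps / 2) by (apply Hd; auto).
  lra.
Qed.

Lemma uniform_continuity_on_interval (g : R -> X) a b : a <= b ->
  (forall t, a <= t <= b -> forall eps, eps > 0 -> exists delta, delta > 0 /\
     forall s, a <= s <= b -> Rabs (s - t) < delta -> D (g t) (g s) < eps) ->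
  forall eps, eps > 0 -> exists delta, delta > 0 /\
    forall s s', a <= s <= b -> a <= s' <= b -> Rabs (s - s') < delta -> D (g s) (g s') < eps.
Proof.
  intros Hab Hc eps Heps.
  set (Q := fun w => a <= w <= b /\ exists delta, delta > 0 /\
     forall s s', a <= s <= w -> a <= s' <= w -> Rabs (s - s') < delta -> D (g s) (g s') < eps).
  assert (Qa : Q a).
  { split; [lra|].
    destruct (close_pairs_near_point g a b a eps Heps (Hc a ltac:(lra))) as [delta [Hdelta Hd]].
    exists delta; split; [exact Hdelta|]. intros s s' Hs Hs' _.
    replace s with a by lra. replace s' with a by lra.
    apply Hd; try lra. all: rewrite Rminus_diag, Rabs_R0; lra. }
  assert (HQb : bound Q) by (exists b; intros x [Hx _]; lra).
  destruct (completeness Q HQb (ex_intro _ a Qa)) as [m Hm].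
  assert (Ham : a <= m) by (apply (proj1 Hm); auto).
  assert (Hmb : m <= b) by (apply (proj2 Hm); intros x [Hx _]; lra).
  destruct (close_pairs_near_point g a b m eps Heps (Hc m (conj Ham Hmb)))
    as [delta [Hdelta Hd]].
  destruct (sup_approx Q m (delta / 2) Hm ltac:(lra)) as [w [[Hw [dw [Hdw Hdwp]]] Hwm]].
  (* pairs reaching beyond [w] lie within [delta] of [m] *)
  assert (Hext : forall w', m <= w' <= b -> w' <= m + delta / 2 -> Q w').
  { intros w' Hw'1 Hw'2. split; [lra|]. exists (Rmin dw (delta / 2)).
    split; [apply Rmin_glb_lt; lra|].
    intros s s' Hs Hs' Hss'.
    assert (Hss'1 : Rabs (s - s') < dw) by (eapply Rlt_le_trans; [exact Hss' | apply Rmin_l]).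
    assert (Hss'2 : Rabs (s - s') < delta / 2)
      by (eapply Rlt_le_trans; [exact Hss' | apply Rmin_r]).
    assert (Hwm' : w <= m) by (apply (proj1 Hm); split; [lra|]; exists dw; auto).
    apply Rabs_lt_iff in Hss'2.
    destruct (Rle_dec (Rmax s s') w) as [Hmax|Hmax].
    - assert (s <= w) by (eapply Rle_trans; [apply Rmax_l | exact Hmax]).
      assert (s' <= w) by (eapply Rle_trans; [apply Rmax_r | exact Hmax]).
      apply Hdwp; [lra | lra | exact Hss'1].
    - unfold Rmax in Hmax.
      apply Hd; try lra; apply Rabs_lt_iff; destruct (Rle_dec s s'); lra. }
  destruct (Rle_dec b (m + delta / 2)) as [Hb|Hb].
  - destruct (Hext b ltac:(lra) Hb) as [_ Qb]. destruct Qb as [dl [Hdl Hdlp]].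
    exists dl; split; auto.
  - assert (Q (m + delta / 2)) by (apply Hext; lra).
    assert (m + delta / 2 <= m) by (apply (proj1 Hm); auto). lra.
Qed.

End UniformContinuity.

Lemma partition_mono a b n t : is_partition a b n t ->
  forall j k, (j <= k <= n)%nat -> t j <= t k.
Proof.
  intros [_ [_ Hinc]] j k. induction k as [|k IH]; intros Hk.
  - replace j with O by lia. lra.
  - destruct (Nat.eq_dec j (S k)) as [->|Hjk]; [lra|].
    assert (t j <= t k) by (apply IH; lia).
    assert (t k < t (S k)) by (apply Hinc; lia). lra.
Qed.

Lemma partition_range a b n t : is_partition a b n t ->
  forall j, (j <= n)%nat -> a <= t j <= b.
Proof.
  intros Hp j Hj. pose proof Hp as [H0 [Hn _]]. rewrite <- H0, <- Hn at 1.
  split; apply (partition_mono a b n t Hp); lia.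
Qed.

Lemma partition_exists a w : a <= w -> exists n t, is_partition a w n t.
Proof.
  intros Haw. destruct (Req_dec a w) as [<-|Hne].
  - exists O, (fun _ => a). repeat split; intros; lia.
  - exists 1%nat, (fun j => match j with O => a | _ => w end).
    repeat split. intros j Hj. replace j with O by lia. lra.
Qed.

Definition snoc (t : nat -> R) (n : nat) (w : R) : nat -> R :=
  fun j => if Nat.leb j n then t j else w.

Lemma partition_snoc d (gamma : R -> vec d) a w w' n t :
  is_partition a w n t -> w < w' ->
  is_partition a w' (S n) (snoc t n w') /\
  poly_length gamma (S n) (snoc t n w') = poly_length gamma n t + dist (gamma w) (gamma w').
Proof.
  intros [H0 [Hn Hinc]] Hw.
  assert (Hin : forall j, (j <= n)%nat -> snoc t n w' j = t j)
    by (intros j Hj; unfold snoc; rewrite (proj2 (Nat.leb_le j n)) by lia; reflexivity).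
  assert (Hout : snoc t n w' (S n) = w')
    by (unfold snoc; rewrite (proj2 (Nat.leb_gt (S n) n)) by lia; reflexivity).
  split; [repeat split|].
  - rewrite Hin by lia. exact H0.
  - exact Hout.
  - intros j Hj. destruct (Nat.eq_dec j n) as [->|Hjn].
    + rewrite Hout, Hin, Hn by lia. exact Hw.
    + rewrite !Hin by lia. apply Hinc; lia.
  - unfold poly_length. cbn [sum_lt]. rewrite Hout, Hin, Hn by lia. f_equal.
    apply sum_lt_ext. intros j Hj. rewrite !Hin by lia. reflexivity.
Qed.

Definition controls_chords {d : nat} (gamma : R -> vec d) (a b : R) (Lam : R -> R) : Prop :=
  forall w w', a <= w -> w <= w' -> w' <= b -> dist (gamma w) (gamma w') <= Lam w' - Lam w.

Lemma controls_chords_mono d (gamma : R -> vec d) a b Lam : controls_chords gamma a b Lam ->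
  forall w w', a <= w -> w <= w' -> w' <= b -> Lam w <= Lam w'.
Proof.
  intros HL w w' H1 H2 H3. assert (H := HL w w' H1 H2 H3).
  assert (Hd := dist_nonneg d (gamma w) (gamma w')). lra.
Qed.

Lemma controls_chords_Rabs d (gamma : R -> vec d) a b Lam : controls_chords gamma a b Lam ->
  forall w w', a <= w <= b -> a <= w' <= b -> dist (gamma w) (gamma w') <= Rabs (Lam w' - Lam w).
Proof.
  intros HL w w' Hw Hw'. destruct (Rle_dec w w') as [Hle|Hlt].
  - eapply Rle_trans; [apply (HL w w'); lra | apply Rle_abs].
  - rewrite dist_sym, Rabs_minus_sym.
    eapply Rle_trans; [apply (HL w' w); lra | apply Rle_abs].
Qed.

Lemma rectifiable_initial_bound d (gamma : R -> vec d) a b : rectifiable gamma a b ->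
  exists M, forall c n t, c <= b -> is_partition a c n t -> poly_length gamma n t <= M.
Proof.
  intros [M HM]. exists M. intros c n t Hcb Hp.
  destruct (Rle_lt_dec b c) as [Hbc|Hcb'].
  - replace c with b in Hp by lra. apply HM, Hp.
  - destruct (partition_snoc d gamma a c b n t Hp Hcb') as [Hp' Hlen].
    assert (H := HM _ _ Hp'). rewrite Hlen in H.
    assert (Hd := dist_nonneg d (gamma c) (gamma b)). lra.
Qed.

(* [Lam w] is the length of [gamma] on [[a, w]] (clamped to [[a, b]] so that it is
   defined everywhere). *)
Lemma arc_length_exists d (gamma : R -> vec d) a b : a <= b -> rectifiable gamma a b ->
  exists Lam : R -> R, controls_chords gamma a b Lam.
Proof.
  intros Hab Hrect. destruct (rectifiable_initial_bound d gamma a b Hrect) as [M HM].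
  set (clamp := fun w => Rmax a (Rmin w b)).
  assert (Hclamp : forall w, a <= clamp w <= b).
  { intros w. unfold clamp, Rmax, Rmin.
    destruct (Rle_dec w b), (Rle_dec a w), (Rle_dec a b); lra. }
  assert (Hclamp_id : forall w, a <= w <= b -> clamp w = w).
  { intros w Hw. unfold clamp. rewrite Rmin_left, Rmax_right; lra. }
  set (E := fun w x => exists n t, is_partition a (clamp w) n t /\ x = poly_length gamma n t).
  assert (HEb : forall w, bound (E w)).
  { intros w. exists M. intros x [n [t [Hp ->]]]. apply (HM (clamp w)); auto. apply Hclamp. }
  assert (HEne : forall w, exists x, E w x).
  { intros w. destruct (partition_exists a (clamp w)) as [n [t Hp]]; [apply Hclamp|].
    exists (poly_length gamma n t), n, t. auto. }
  exists (fun w => proj1_sig (completeness (E w) (HEb w) (HEne w))).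
  intros w w' Hw Hww' Hw'. cbv beta.
  destruct (completeness (E w) (HEb w) (HEne w)) as [l Hl].
  destruct (completeness (E w') (HEb w') (HEne w')) as [l' Hl']. simpl proj1_sig.
  cut (l <= l' - dist (gamma w) (gamma w')); [lra|].
  apply (proj2 Hl). intros x [n [t [Hp ->]]].
  rewrite Hclamp_id in Hp by lra.
  destruct (Req_dec w w') as [<-|Hne].
  - rewrite (proj2 (dist_eq0 d _ _) eq_refl).
    assert (poly_length gamma n t <= l'); [|lra].
    apply (proj1 Hl'). exists n, t. rewrite Hclamp_id by lra. auto.
  - destruct (partition_snoc d gamma a w w' n t Hp ltac:(lra)) as [Hp' Hlen].
    assert (poly_length gamma (S n) (snoc t n w') <= l'); [|lra].
    apply (proj1 Hl'). exists (S n), (snoc t n w'). rewrite Hclamp_id by lra. auto.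
Qed.

Lemma is_derivative_bound d (K : vec d -> Prop) f df x eps :
  is_derivative K f df -> K x -> eps > 0 ->
  exists delta, delta > 0 /\ forall y, K y -> dist x y < delta ->
    Rabs (f y - f x - dotR d (coord (df x)) (vdiff y x)) <= eps * dist x y.
Proof.
  intros Hd Kx Heps. destruct (Hd x Kx eps Heps) as [delta [Hdelta H]].
  exists delta; split; [exact Hdelta|]. intros y Ky Hy.
  destruct (classic (y = x)) as [->|Hne].
  - rewrite (proj2 (dist_eq0 d x x) eq_refl), Rmult_0_r.
    replace (vdiff x x) with (fun i : nat => coord x i - coord x i) by reflexivity.
    rewrite dotR_minus_r. unfold Rminus. rewrite !Rplus_opp_r, Rabs_R0. lra.
  - assert (Hpos : 0 < dist x y) by (apply dist_pos; auto).
    specialize (H y Ky Hne Hy).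
    set (r := f y - f x - dotR d (coord (df x)) (vdiff y x)) in *.
    replace r with (r / dist x y * dist x y) by (field; lra).
    rewrite Rabs_mult, (Rabs_right (dist x y)) by lra.
    apply Rmult_le_compat_r; lra.
Qed.

Lemma dotR_vdiff_le_dist d (c z x y : vec d) :
  Rabs (dotR d (vdiff z c) (vdiff y x)) <= dist c z * dist x y.
Proof. apply Cauchy_Schwarz. Qed.

Lemma increment_linearization_bound d (K : vec d -> Prop) f df gamma a b Lam eta (c : vec d) u v :
  is_derivative K f df -> is_path K gamma a b -> controls_chords gamma a b Lam ->
  eta > 0 -> a <= u -> u <= v -> v <= b ->
  (forall s, u <= s <= v -> dist c (df (gamma s)) <= eta) ->
  Rabs (f (gamma v) - f (gamma u) - dotR d (coord c) (vdiff (gamma v) (gamma u)))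
    <= 2 * eta * (Lam v - Lam u).
Proof.
  intros Hd [_ [HK Hg]] HL Heta Hau Huv Hvb Hc.
  set (psi := fun s => f (gamma s) - dotR d (coord c) (coord (gamma s))).
  set (G := fun s => 2 * eta * Lam s).
  replace (f (gamma v) - f (gamma u) - dotR d (coord c) (vdiff (gamma v) (gamma u)))
    with (psi v - psi u) by (unfold psi, vdiff; rewrite dotR_minus_r; ring).
  replace (2 * eta * (Lam v - Lam u)) with (G v - G u) by (unfold G; ring).
  apply increment_bound_of_local; [exact Huv| |].
  { intros s s' H1 H2 H3. unfold G.
    assert (Lam s <= Lam s') by (apply (controls_chords_mono d gamma a b Lam HL); lra).
    nra. }
  intros s Hs.
  assert (Hsab : a <= s <= b) by lra.
  destruct (is_derivative_bound d K f df (gamma s) eta Hd (HK s Hsab) Heta)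
    as [delta1 [Hdelta1 H1]].
  destruct (Hg s Hsab delta1 Hdelta1) as [delta2 [Hdelta2 H2]].
  exists delta2; split; [exact Hdelta2|]. intros s' Hs' Hss'.
  assert (Hs'ab : a <= s' <= b) by lra.
  assert (Hsplit : psi s' - psi s =
     (f (gamma s') - f (gamma s) - dotR d (coord (df (gamma s))) (vdiff (gamma s') (gamma s)))
     + dotR d (vdiff (df (gamma s)) c) (vdiff (gamma s') (gamma s))).
  { unfold psi, vdiff. rewrite dotR_minus_l, !dotR_minus_r. ring. }
  assert (Hlin := H1 (gamma s') (HK s' Hs'ab) (H2 s' Hs'ab Hss')).
  assert (Hgrad := dotR_vdiff_le_dist d c (df (gamma s)) (gamma s) (gamma s')).
  assert (Hchord := controls_chords_Rabs d gamma a b Lam HL s s' Hsab Hs'ab).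
  assert (Hdist := dist_nonneg d (gamma s) (gamma s')).
  assert (Hcs := Hc s Hs).
  assert (dist c (df (gamma s)) * dist (gamma s) (gamma s') <= eta * dist (gamma s) (gamma s'))
    by (apply Rmult_le_compat_r; lra).
  unfold G. rewrite <- Rmult_minus_distr_l, Rabs_mult, (Rabs_right (2 * eta)) by lra.
  rewrite Hsplit. eapply Rle_trans; [apply Rabs_triang|].
  nra.
Qed.

Lemma RS_sum_minus_increment d (F : vec d -> vec d) (gamma : R -> vec d) f a b n t tau :
  is_partition a b n t ->
  RS_sum F gamma n t tau - (f (gamma b) - f (gamma a))
  = sum_lt n (fun j =>
      dotR d (coord (F (gamma (tau (S j))))) (vdiff (gamma (t (S j))) (gamma (t j)))
      - (f (gamma (t (S j))) - f (gamma (t j)))).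
Proof.
  intros [H0 [Hn _]]. unfold RS_sum. rewrite sum_lt_minus.
  rewrite (sum_lt_telescope n (fun j => f (gamma (t j)))), Hn, H0. reflexivity.
Qed.

Lemma continuous_along_path d (K : vec d -> Prop) (F : vec d -> vec d) gamma a b :
  continuous_on K F -> is_path K gamma a b ->
  forall t, a <= t <= b -> forall eps, eps > 0 -> exists delta, delta > 0 /\
    forall s, a <= s <= b -> Rabs (s - t) < delta -> dist (F (gamma t)) (F (gamma s)) < eps.
Proof.
  intros HF [_ [HK Hg]] t Ht eps Heps.
  destruct (HF (gamma t) (HK t Ht) eps Heps) as [delta1 [Hdelta1 H1]].
  destruct (Hg t Ht delta1 Hdelta1) as [delta2 [Hdelta2 H2]].
  exists delta2; split; [exact Hdelta2|]. intros s Hs Hst. apply H1; auto.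
Qed.

Lemma RS_sum_error_le d (K : vec d -> Prop) f df gamma a b Lam eta delta n t tau :
  is_derivative K f df -> is_path K gamma a b -> controls_chords gamma a b Lam -> eta > 0 ->
  (forall s s', a <= s <= b -> a <= s' <= b -> Rabs (s - s') < delta ->
     dist (df (gamma s)) (df (gamma s')) < eta) ->
  is_partition a b n t ->
  (forall j, (j < n)%nat -> t (S j) - t j < delta) ->
  (forall j, (j < n)%nat -> t j <= tau (S j) <= t (S j)) ->
  Rabs (RS_sum df gamma n t tau - (f (gamma b) - f (gamma a))) <= 2 * eta * (Lam b - Lam a).
Proof.
  intros Hd Hpath HL Heta Hunif Hp Hmesh Htag.
  rewrite (RS_sum_minus_increment d df gamma f a b n t tau Hp).
  eapply Rle_trans; [apply Rabs_sum_lt_le|].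
  pose proof Hp as [H0 [Hn Hinc]].
  rewrite <- Hn, <- H0, <- (sum_lt_telescope n (fun j => Lam (t j))), <- sum_lt_scal.
  apply sum_lt_le. intros j Hj.
  assert (Htj := partition_range a b n t Hp j ltac:(lia)).
  assert (Htj1 := partition_range a b n t Hp (S j) ltac:(lia)).
  assert (Hstep := Hinc j Hj). assert (Hm := Hmesh j Hj). assert (Htau := Htag j Hj).
  rewrite Rabs_minus_sym.
  apply (increment_linearization_bound d K f df gamma a b Lam eta); auto; try lra.
  intros s Hs. left. apply Hunif; try lra. apply Rabs_lt_iff. lra.
Qed.

Theorem mainTheorem2 (d : nat) (K : vec d -> Prop) (f : vec d -> R)
  (df : vec d -> vec d)
  (HK : compactK K) (Hf : in_C1 K f)
  (Hdf : is_derivative K f df) (Hdfc : continuous_on K df)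
  (gamma : R -> vec d) (a b : R)
  (Hpath : is_path K gamma a b) (Hrect : rectifiable gamma a b) :
  is_path_integral df gamma a b (f (gamma b) - f (gamma a)).
Proof.
  pose proof Hpath as [Hab _].
  destruct (arc_length_exists d gamma a b ltac:(lra) Hrect) as [Lam HL].
  assert (HLab : Lam a <= Lam b) by (apply (controls_chords_mono d gamma a b Lam HL); lra).
  intros eps Heps.
  set (eta := eps / (2 * (Lam b - Lam a + 1))).
  assert (Heta : eta > 0) by (unfold eta; apply Rdiv_lt_0_compat; lra).
  destruct (uniform_continuity_on_interval (vec d) dist (dist_sym d) (dist_triangle d)
              (fun s => df (gamma s)) a b ltac:(lra)
              (continuous_along_path d K df gamma a b Hdfc Hpath) eta Heta)
    as [delta [Hdelta Hunif]].
  exists delta; split; [exact Hdelta|].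
  intros n t tau Hp Hmesh Htag.
  eapply Rle_lt_trans; [exact (RS_sum_error_le d K f df gamma a b Lam eta delta n t tau
                                 Hdf Hpath HL Heta Hunif Hp Hmesh Htag)|].
  unfold eta. apply (Rmult_lt_reg_r (Lam b - Lam a + 1)); [lra|]. field_simplify; nra.
Qed.
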